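(* Suppose $J^d_\mu$ takes the same value for all $d\in\mathcal D$. Then the policy $d$ returned by Algorithm 1 (from any initial policy) is globally optimal: $J^d_{\mu,\sigma}=\max_{d'\in\mathcal D}J^{d'}_{\mu,\sigma}$.
   Context: Let $\mathcal S=\{1,\dots,S\}$ be a finite state space and $\mathcal A$ a finite action set, with transition probabilities $p^a(i,j)\ge0$ ($\sum_j p^a(i,j)=1$) and rewards $r(i,a)\in\mathbb R$. A deterministic stationary policy is a map $d:\mathcal S\to\mathcal A$; $\mathcal D$ is the set of these; $\mathbf P^d$ has entries $p^{d(i)}(i,j)$, $\mathbf r^d$ has entries $r(i,d(i))$. Standing assumption: every $\mathbf P^d$ is irreducible, with unique stationary distribution $\boldsymbol\pi^d$ (positive entries). Define $J^d_\mu=\boldsymbol\pi^d\mathbf r^d$, and for fixed $\beta>0$, $J^d_{\mu,\sigma}=\boldsymbol\pi^d\mathbf f^d$ with $f^d(i)=r(i,d(i))-\beta(r(i,d(i))-J^d_\mu)^2$; $\mathbf g^d$ is any solution of $\mathbf g^d=\mathbf f^d-J^d_{\mu,\sigma}\mathbf 1+\mathbf P^d\mathbf g^d$. Algorithm 1: choose any $d^{(0)}\in\mathcal D$, $l=0$; repeat: compute $J_\mu=J^{d^{(l)}}_\mu$ and $\mathbf g=\mathbf g^{d^{(l)}}$; define $d^{(l+1)}(i)\in\arg\max_{a\in\mathcal A}\{r(i,a)-\beta[r(i,a)-J_\mu]^2+\sum_j p^a(i,j)g(j)\}$ for all $i$, choosing $d^{(l+1)}(i)=d^{(l)}(i)$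 whenever $d^{(l)}(i)$ attains the maximum; set $l:=l+1$; until $d^{(l)}=d^{(l-1)}$; return $d^{(l)}$ (this terminates after finitely many iterations). *)

From HB Require Import structures.
From mathcomp Require Import all_boot all_order all_algebra.
Set Implicit Arguments. Unset Strict Implicit. Unset Printing Implicit Defensive.
Import Order.TTheory GRing.Theory Num.Theory.
Local Open Scope ring_scope.

Section MDP.
Variables (R : realFieldType) (S : nat) (A : finType).
(* p a i j = p^a(i,j), r i a = r(i,a) *)
Variables (p : A -> 'I_S -> 'I_S -> R) (r : 'I_S -> A -> R).

Definition policy := {ffun 'I_S -> A}.

Definition Pmat (d : policy) : 'M[R]_S := \matrix_(i, j) p (d i) i j.

Definition stochastic : Prop :=
  forall a i, (forall j, 0 <= p a i j) /\ \sum_j p a i j = 1.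

Definition irreducible (d : policy) : Prop :=
  forall i j, connect (fun x y => 0 < Pmat d x y) i j.

Definition stationary_dist (d : policy) (pi : 'I_S -> R) : Prop :=
  (forall i, 0 <= pi i) /\ \sum_i pi i = 1 /\
  (forall j, \sum_i pi i * Pmat d i j = pi j).

Variable (pi : policy -> 'I_S -> R).
Variable (beta : R).

Definition Jmu (d : policy) : R := \sum_i pi d i * r i (d i).

Definition fvec (d : policy) (i : 'I_S) : R :=
  r i (d i) - beta * (r i (d i) - Jmu d) ^+ 2.

Definition Jmusig (d : policy) : R := \sum_i pi d i * fvec d i.

Definition poisson_sol (d : policy) (g : 'I_S -> R) : Prop :=
  forall i, g i = fvec d i - Jmusig d + \sum_j Pmat d i j * g j.

(* one iteration of Algorithm 1: from d (with J_mu = J^d_mu and some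
   solution g) to d' *)
Definition alg_step (d d' : policy) : Prop :=
  exists g, poisson_sol d g /\
  let Q i a := r i a - beta * (r i a - Jmu d) ^+ 2 + \sum_j p a i j * g j in
  forall i, (forall a, Q i a <= Q i (d' i)) /\
            ((forall a, Q i a <= Q i (d i)) -> d' i = d i).

(* ds 0, ..., ds L is a run of Algorithm 1 that terminates (for the first
   time) at iteration L, returning ds L *)
Definition alg_run (ds : nat -> policy) (L : nat) : Prop :=
  (0 < L)%N /\
  (forall l, (l < L)%N -> alg_step (ds l) (ds l.+1)) /\
  (forall l, (0 < l < L)%N -> ds l != ds l.-1) /\
  ds L = ds L.-1.

End MDP.

(* Algorithm 1 stops at d = ds L with ds L = ds (L-1), so d is a
   fixed point of one improvement step: for a solution g of the Poisson
   equation of d, every state i satisfies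
     Q_d(i, a) <= Q_d(i, d(i)) = g(i) + J^d_{mu,sigma}   for all actions a.
   Since J^{d'}_mu = J^d_mu, the value Q_d(i, d'(i)) is exactly
   f^{d'}(i) + (P^{d'} g)(i), hence f^{d'} + P^{d'} g <= g + J^d_{mu,sigma} 1
   componentwise.  Averaging against the stationary distribution pi^{d'},
   which is invariant under P^{d'}, the g-terms cancel and we are left with
   J^{d'}_{mu,sigma} <= J^d_{mu,sigma}. *)
From HB Require Import structures.
From mathcomp Require Import all_boot all_order all_algebra.
From mathcomp Require Import lra.
Import Order.TTheory GRing.Theory Num.Theory.
Local Open Scope ring_scope.

Section FixedPointOptimality.
Variables (R : realFieldType) (S : nat) (A : finType).
Variables (p : A -> 'I_S -> 'I_S -> R) (r : 'I_S -> A -> R).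
Variables (pi : policy S A -> 'I_S -> R) (beta : R).

Lemma Pmat_row (d : policy S A) (g : 'I_S -> R) (i : 'I_S) :
  \sum_j Pmat p d i j * g j = \sum_j p (d i) i j * g j.
Proof. by apply: eq_bigr => j _; rewrite mxE. Qed.

Lemma stationary_average (d : policy S A) (mu g : 'I_S -> R) :
  stationary_dist p d mu ->
  \sum_i mu i * \sum_j Pmat p d i j * g j = \sum_j mu j * g j.
Proof.
case=> _ [_ mu_inv].
under eq_bigr do rewrite mulr_sumr.
rewrite exchange_big /=; apply: eq_bigr => j _.
by rewrite -mu_inv mulr_suml; apply: eq_bigr => i _; rewrite mulrA.
Qed.

Lemma stationary_average_bound (d : policy S A) (mu h g : 'I_S -> R) (c : R) :
  stationary_dist p d mu ->
  (forall i, h i + \sum_j Pmat p d i j * g j <= g i + c) ->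
  \sum_i mu i * h i <= c.
Proof.
move=> mu_st hle; have [mu_ge0 [mu_sum1 _]] := mu_st.
have avg : \sum_i mu i * (h i + \sum_j Pmat p d i j * g j)
           <= \sum_i mu i * (g i + c).
  by apply: ler_sum => i _; apply: ler_wpM2l.
move: avg; rewrite !(eq_bigr _ (fun i _ => mulrDr _ _ _)) !big_split /=.
rewrite -mulr_suml mu_sum1 mul1r stationary_average //; lra.
Qed.

Lemma fixed_point_optimal (d : policy S A) :
  (forall d', stationary_dist p d' (pi d')) ->
  (forall d', Jmu r pi d' = Jmu r pi d) ->
  alg_step p r pi beta d d ->
  forall d', Jmusig r pi beta d' <= Jmusig r pi beta d.
Proof.
move=> stat sameJ [g [poisson greedy]] d'.
(* Q_d(i, d'(i)) <= Q_d(i, d(i)), read through the Poisson equation of d. *)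
have dominated i :
    fvec r pi beta d' i + \sum_j Pmat p d' i j * g j <= g i + Jmusig r pi beta d.
  have [maxQ _] := greedy i; have := maxQ (d' i).
  by rewrite (poisson i) /fvec (sameJ d') !Pmat_row; lra.
rewrite {1}/Jmusig; exact: stationary_average_bound (stat d') dominated.
Qed.

Lemma alg_run_fixed_point (ds : nat -> policy S A) (L : nat) :
  alg_run p r pi beta ds L -> alg_step p r pi beta (ds L) (ds L).
Proof.
case=> L_gt0 [steps [_ stop]].
by have := steps L.-1; rewrite prednK // -stop; apply.
Qed.

End FixedPointOptimality.

(* The kernel, irreducibility and beta > 0 hypotheses only make pi^d and the
   mean-variance criterion meaningful; the optimality argument needs just the
   stationarity of pi^d and the common mean reward. *)
Theorem mainTheorem10 (R : realFieldType) (S : nat) (A : finType)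
    (p : A -> 'I_S -> 'I_S -> R) (r : 'I_S -> A -> R)
    (pi : policy S A -> 'I_S -> R) (beta : R) :
  stochastic p ->
  (forall d : policy S A, irreducible p d) ->
  (forall d : policy S A, stationary_dist p d (pi d)) ->
  0 < beta ->
  (forall d d' : policy S A, Jmu r pi d = Jmu r pi d') ->
  forall (ds : nat -> policy S A) (L : nat),
    alg_run p r pi beta ds L ->
    forall d' : policy S A,
      Jmusig r pi beta d' <= Jmusig r pi beta (ds L).
Proof.
move=> _ _ stat _ sameJ ds L run.
apply: fixed_point_optimal => //.
exact: alg_run_fixed_point.
Qed.
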